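(* Let $g\in\mathscr H$. Two solutions $f,h\in\mathscr H$ of $L(y)=g$ are equal if and only if $f_\gamma=h_\gamma$ for all $\gamma\in-\mathcal S(L)$.
   Context: Let $\mathbf K$ be a field and $\ell\geq 2$ an integer. Let $\mathscr H$ be the field of Hahn series $f=\sum_{\gamma\in\mathbb Q}f_\gamma z^\gamma$ with coefficients in $\mathbf K$ and well-ordered support. Let $\phi_\ell$ be the automorphism $f(z)\mapsto f(z^\ell)$. Let $L=a_n\phi_\ell^n+\dots+a_0$ with $n\geq1$, $a_i\in\mathbf K[z]$, $a_0a_n\neq0$, acting by $L(f)=\sum_i a_i f(z^{\ell^i})$. The Newton polygon of $L$ is the convex hull of $\{(\ell^i,j): 0\le i\le n,\ j\geq\operatorname{val} a_i\}\subset\mathbb R^2$ (where $\operatorname{val} a_i$ is the $z$-adic valuation); the slopes of its non-vertical edges form the set $\mathcal S(L)$, and $-\mathcal S(L)=\{-\mu:\mu\in\mathcal S(L)\}$. *)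

From HB Require Import structures.
From mathcomp Require Import all_boot all_order all_algebra.
Set Implicit Arguments. Unset Strict Implicit. Unset Printing Implicit Defensive.
Import Order.TTheory GRing.Theory Num.Theory.
Local Open Scope ring_scope.

(* A formal series with rational exponents and coefficients in K is
   represented by its coefficient function  gamma |-> f_gamma. *)

(* Hahn series: the support is well-ordered (every nonempty subset of the
   support has a least element; Q is totally ordered). *)
Definition is_hahn (K : fieldType) (f : rat -> K) : Prop :=
  forall P : rat -> Prop,
    (exists x, P x /\ f x != 0) ->
    exists m, [/\ P m, f m != 0 & forall y, P y -> f y != 0 -> m <= y].

Definition zval (K : fieldType) (p : {poly K}) : nat :=
  find (fun c => c != 0) (polyseq p).

(* The operator L = sum_{i<=n} a_i phi_l^i acting on coefficient functions:
   the coefficient of z^gamma in a_i(z) f(z^(l^i)) is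
   sum_k (a_i)_k f_{(gamma - k)/l^i}. *)
Definition Lop (K : fieldType) (l n : nat) (a : nat -> {poly K})
  (f : rat -> K) : rat -> K :=
  fun gamma =>
    \sum_(i < n.+1) \sum_(k < size (a i))
       (a i)`_k * f ((gamma - k%:R) / (l ^ i)%:R).

(* Points generating the Newton polygon: (l^i, j) with j >= val a_i
   (only for a_i <> 0, since val 0 = +oo). *)
Definition NP_point (K : fieldType) (l n : nat) (a : nat -> {poly K})
  (x y : rat) : Prop :=
  exists i : nat, [/\ (i <= n)%N, a i != 0 &
    exists j : nat, [/\ (zval (a i) <= j)%N, x = (l ^ i)%:R & y = j%:R]].

(* mu is the slope of a non-vertical edge of the Newton polygon (the convex
   hull of the NP_points): there is a supporting line y = mu x + c with the
   whole polygon on or above it, meeting the polygon in a segment of positive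
   length, i.e. containing two distinct generating points. *)
Definition NP_slope (K : fieldType) (l n : nat) (a : nat -> {poly K})
  (mu : rat) : Prop :=
  exists c : rat,
    (forall x y, NP_point l n a x y -> mu * x + c <= y) /\
    exists x1 y1 x2 y2,
      [/\ NP_point l n a x1 y1, NP_point l n a x2 y2, (x1, y1) != (x2, y2),
          mu * x1 + c = y1 & mu * x2 + c = y2].

(* Let d = f - h, a Hahn series annihilated by L, and suppose d <> 0 with
   least exponent g0.  The term a_i(z) d(z^(l^i)) starts at the exponent
   w_i = val a_i + l^i g0, so if the minimum of the w_i were attained by a
   single i, the coefficient of z^(min w_i) in L(d) would be the nonzero
   product of the lowest coefficients of a_i and d.  Hence the minimum is
   attained twice, and the line y = -g0 x + min w_i supports the Newton
   polygon at two of its generating points: -g0 is a slope, so f and h agree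
   at g0 by hypothesis, a contradiction. *)

From HB Require Import structures.
From mathcomp Require Import all_boot all_order all_algebra.
From mathcomp Require Import lra.
From Stdlib Require Import Classical FunctionalExtensionality.
Set Implicit Arguments. Unset Strict Implicit. Unset Printing Implicit Defensive.
Import Order.TTheory GRing.Theory Num.Theory.
Local Open Scope ring_scope.

Lemma hahn_least_or_none (K : fieldType) (f : rat -> K) (Q : rat -> Prop) :
  is_hahn f ->
  (forall y, Q y -> f y = 0) \/
  exists m, [/\ Q m, f m != 0 & forall y, Q y -> f y != 0 -> m <= y].
Proof.
move=> Hf; case: (classic (exists y, Q y /\ f y != 0)) => [/Hf|Nf]; first by right.
by left=> y Qy; apply/eqP/negPn/negP => fy; apply: Nf; exists y.
Qed.

Lemma is_hahnB (K : fieldType) (f h : rat -> K) :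
  is_hahn f -> is_hahn h -> is_hahn (fun x => f x - h x).
Proof.
move=> Hf Hh P [x [Px dx]].
pose Q y := P y /\ f y - h y != 0.
have Qx : Q x by [].
have supp y : Q y -> f y = 0 -> h y != 0.
  by move=> [_ dy] fy; apply: contra dy => /eqP hy; rewrite fy hy subrr.
case: (hahn_least_or_none Q Hf) => [Nf|[m1 [[P1 d1] _ M1]]];
case: (hahn_least_or_none Q Hh) => [Nh|[m2 [[P2 d2] _ M2]]].
- by move: dx; rewrite (Nf _ Qx) (Nh _ Qx) subrr eqxx.
- exists m2; split=> // y Py dy; have Qy : Q y by [].
  exact: M2 _ Qy (supp _ Qy (Nf _ Qy)).
- exists m1; split=> // y Py dy; have Qy : Q y by [].
  case: (eqVneq (f y) 0) => fy; last exact: M1.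
  by move: (supp _ Qy fy); rewrite (Nh _ Qy) eqxx.
- case: (leP m1 m2) => L; [exists m1 | exists m2]; split=> // y Py dy;
    have Qy : Q y by []; case: (eqVneq (f y) 0) => fy.
  + exact: le_trans L (M2 _ Qy (supp _ Qy fy)).
  + exact: M1.
  + exact: M2 _ Qy (supp _ Qy fy).
  + exact: le_trans (ltW L) (M1 _ Qy fy).
Qed.

Lemma zval_coef_neq0 (K : fieldType) (p : {poly K}) :
  p != 0 -> (zval p < size p)%N /\ p`_(zval p) != 0.
Proof.
move=> p0.
have Hs : has (fun c => c != 0) p.
  apply/hasP; exists (lead_coef p); last by rewrite lead_coef_eq0.
  by rewrite lead_coefE; apply: mem_nth; rewrite prednK ?size_poly_gt0.
by split; [rewrite /zval -has_find | exact: (nth_find 0 Hs)].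
Qed.

Lemma zval_le (K : fieldType) (p : {poly K}) (k : nat) :
  p`_k != 0 -> (zval p <= k)%N.
Proof. by apply: contraR; rewrite -ltnNge => /(before_find 0) /negbFE. Qed.

Lemma LopB (K : fieldType) (l n : nat) (a : nat -> {poly K}) (f h : rat -> K)
  (gamma : rat) :
  Lop l n a (fun x => f x - h x) gamma = Lop l n a f gamma - Lop l n a h gamma.
Proof.
rewrite /Lop -sumrB; apply: eq_bigr => i _; rewrite -sumrB.
by apply: eq_bigr => k _; rewrite mulrBr.
Qed.

Section LeastExponent.

Variables (K : fieldType) (l n : nat) (a : nat -> {poly K}).
Variables (d : rat -> K) (g0 : rat).
Hypothesis l_gt0 : (0 < l)%N.
Hypothesis d_g0 : d g0 != 0.
Hypothesis d_least : forall y, d y != 0 -> g0 <= y.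

Let lpow_gt0 (i : nat) : (0 : rat) < (l ^ i)%:R.
Proof. by rewrite ltr0n expn_gt0 l_gt0. Qed.

(* The exponent of the lowest term of a_i(z) d(z^(l^i)). *)
Definition lowest_exponent (i : nat) : rat :=
  (zval (a i))%:R + (l ^ i)%:R * g0.

Lemma Lop_term_neq0 (i k : nat) (gamma : rat) :
  (a i)`_k * d ((gamma - k%:R) / (l ^ i)%:R) != 0 ->
  (zval (a i) <= k)%N /\ k%:R + (l ^ i)%:R * g0 <= gamma.
Proof.
rewrite mulf_eq0 negb_or => /andP [/zval_le -> /d_least].
by rewrite ler_pdivlMr // => ?; split=> //; lra.
Qed.

Lemma Lop_at_unique_lowest_exponent (i0 : 'I_n.+1) :
  a i0 != 0 ->
  (forall i : 'I_n.+1, a i != 0 -> i != i0 ->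
     lowest_exponent i0 < lowest_exponent i) ->
  Lop l n a d (lowest_exponent i0) = (a i0)`_(zval (a i0)) * d g0.
Proof.
move=> ai0 lowest; have [vlt _] := zval_coef_neq0 ai0.
rewrite /Lop (bigD1 i0) //= (bigD1 (Ordinal vlt)) //=.
have -> : (lowest_exponent i0 - (zval (a i0))%:R) / (l ^ i0)%:R = g0.
  by rewrite /lowest_exponent addrAC subrr add0r mulrC mulKf ?gt_eqF.
rewrite !big1 ?addr0 // => [i ii0|k /eqP kv].
- case: (eqVneq (a i) 0) => [->|ai]; first by rewrite size_poly0 big_ord0.
  apply: big1 => k _; apply/eqP/negP => /negP /Lop_term_neq0 [vk].
  have := lowest i ai ii0; rewrite /lowest_exponent.
  have : ((zval (a i))%:R : rat) <= k%:R by rewrite ler_nat.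
  lra.
- apply/eqP/negP => /negP /Lop_term_neq0 [vk].
  have : ((zval (a i0)).+1%:R : rat) <= k%:R.
    rewrite ler_nat ltn_neqAle eq_sym vk andbT.
    by apply/eqP => E; apply: kv; apply: val_inj.
  rewrite /lowest_exponent -addn1 natrD; lra.
Qed.

Lemma NP_slope_of_double_lowest_exponent (i0 j : 'I_n.+1) :
  (2 <= l)%N -> a i0 != 0 -> a j != 0 -> j != i0 ->
  lowest_exponent j = lowest_exponent i0 ->
  (forall i : 'I_n.+1, a i != 0 -> lowest_exponent i0 <= lowest_exponent i) ->
  NP_slope l n a (- g0).
Proof.
move=> l2 ai0 aj ji Ej lowest.
have NP_lowest (i : 'I_n.+1) :
    a i != 0 -> NP_point l n a (l ^ i)%:R (zval (a i))%:R.
  by move=> ai; exists i; split=> //; [rewrite -ltnS | exists (zval (a i))].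
exists (lowest_exponent i0); split.
  move=> x y [i [iN ai [k [vk -> ->]]]].
  have := lowest (Ordinal (iN : (i < n.+1)%N)) ai; rewrite /lowest_exponent /=.
  have : ((zval (a i))%:R : rat) <= k%:R by rewrite ler_nat.
  lra.
exists (l ^ i0)%:R, (zval (a i0))%:R, (l ^ j)%:R, (zval (a j))%:R.
split; [exact: NP_lowest | exact: NP_lowest | | |].
- apply/negP => /eqP [] /eqP; rewrite eqr_nat eqn_exp2l // => /eqP E.
  by move: ji; rewrite -val_eqE /= E eqxx.
- rewrite /lowest_exponent; lra.
- move: Ej; rewrite /lowest_exponent; lra.
Qed.

Lemma NP_slope_of_least_exponent_of_kernel :
  (2 <= l)%N -> a 0%N != 0 -> (forall gamma, Lop l n a d gamma = 0) ->
  NP_slope l n a (- g0).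
Proof.
move=> l2 a0 Ld.
have [i0 ai0 lowest] :=
  @arg_minP _ _ _ ord0 (fun i : 'I_n.+1 => a i != 0) lowest_exponent a0.
case: (boolP [exists j : 'I_n.+1,
    [&& a j != 0, j != i0 & lowest_exponent j == lowest_exponent i0]]).
  case/existsP => j /and3P [aj ji /eqP Ej].
  exact: NP_slope_of_double_lowest_exponent l2 ai0 aj ji Ej lowest.
rewrite negb_exists => /forallP unique.
have strict (i : 'I_n.+1) :
    a i != 0 -> i != i0 -> lowest_exponent i0 < lowest_exponent i.
  move=> ai ii0; rewrite lt_neqAle lowest // andbT eq_sym.
  by have := unique i; rewrite ai ii0.
have := Ld (lowest_exponent i0).
rewrite Lop_at_unique_lowest_exponent // => /eqP.
by rewrite mulf_eq0 (negbTE (zval_coef_neq0 ai0).2) (negbTE d_g0).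
Qed.

End LeastExponent.

Theorem mainTheorem5 (K : fieldType) (l n : nat) (a : nat -> {poly K})
  (g : rat -> K) :
  (2 <= l)%N -> (1 <= n)%N -> a 0%N != 0 -> a n != 0 ->
  is_hahn g ->
  forall f h : rat -> K, is_hahn f -> is_hahn h ->
    Lop l n a f = g -> Lop l n a h = g ->
    (f = h <-> forall gamma : rat, NP_slope l n a (- gamma) -> f gamma = h gamma).
Proof.
move=> l2 _ a0 _ _ f h Hf Hh Lf Lh; split=> [-> //|agree].
apply: functional_extensionality => x; apply/eqP/negPn/negP => fx.
pose d y := f y - h y.
have dx : d x != 0 by rewrite subr_eq0.
have [g0 [_ d_g0 d_least]] :=
  is_hahnB Hf Hh (ex_intro (fun y => True /\ d y != 0) x (conj I dx)).
have Ld gamma : Lop l n a d gamma = 0 by rewrite LopB Lf Lh subrr.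
have l_gt0 : (0 < l)%N by apply: leq_trans l2.
have := NP_slope_of_least_exponent_of_kernel l_gt0 d_g0
  (fun y => d_least y I) l2 a0 Ld.
by move/agree/eqP; rewrite -subr_eq0 (negbTE d_g0).
Qed.
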